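(* Let $\mathcal{H}$ be a separable Hilbert space with orthonormal basis $\{e_k\}_{k\in\mathbb{N}}$, $\mathcal{H}_n=\mathrm{span}\{e_1,\dots,e_n\}$, and let $\mathcal{S}$ be a closed subspace of $\mathcal{H}$ such that $\sup\{c[\mathcal{S},\mathcal{H}_n]:n\in\mathbb{N}\}<1$. Then $\overline{\bigcup_{n=1}^\infty(\mathcal{S}\cap\mathcal{H}_n)}=\mathcal{S}$.
   Context: For closed subspaces $\mathcal{M},\mathcal{N}$, $c[\mathcal{M},\mathcal{N}]=\sup\{|\langle\xi,\eta\rangle|:\xi\in\mathcal{M}\ominus(\mathcal{M}\cap\mathcal{N}),\ \eta\in\mathcal{N}\ominus(\mathcal{M}\cap\mathcal{N}),\ \|\xi\|=\|\eta\|=1\}$ (cosine of the Friedrichs angle). *)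

From HB Require Import structures.
From mathcomp Require Import all_boot all_order all_algebra.
From mathcomp Require Import all_classical reals.
From mathcomp Require Import complex.

Set Implicit Arguments.
Unset Strict Implicit.
Unset Printing Implicit Defensive.
Import Order.TTheory GRing.Theory Num.Theory.
Local Open Scope ring_scope.
Local Open Scope classical_set_scope.

Section Hilbert.
Variable R : realType.
Local Notation C := R[i].
Variable V : lmodType C.
Variable ip : V -> V -> C.

Definition is_inner_product : Prop :=
  [/\ forall (a : C) (x y z : V), ip (a *: x + y) z = a * ip x z + ip y z,
      forall x y : V, ip y x = (ip x y)^*,
      forall x : V, 0 <= ip x x
    & forall x : V, ip x x = 0 -> x = 0].

Definition ipnorm (x : V) : R := Num.sqrt (complex.Re (ip x x)).

Definition ip_cauchy (u : nat -> V) : Prop :=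
  forall eps : R, 0 < eps -> exists N : nat,
    forall m n : nat, (N <= m)%N -> (N <= n)%N -> ipnorm (u m - u n) < eps.

Definition ip_converges_to (u : nat -> V) (l : V) : Prop :=
  forall eps : R, 0 < eps -> exists N : nat,
    forall n : nat, (N <= n)%N -> ipnorm (u n - l) < eps.

Definition is_hilbert : Prop :=
  is_inner_product /\
  forall u : nat -> V, ip_cauchy u -> exists l : V, ip_converges_to u l.

Definition ip_closure (A : set V) : set V :=
  [set x | forall eps : R, 0 < eps -> exists2 a, A a & ipnorm (x - a) < eps].

Definition is_subspace (M : set V) : Prop :=
  M 0 /\ forall (a : C) (x y : V), M x -> M y -> M (a *: x + y).

Definition closed_subspace (M : set V) : Prop :=
  is_subspace M /\ ip_closure M `<=` M.

Definition span_first (e : nat -> V) (n : nat) : set V :=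
  [set x | exists c : nat -> C, x = \sum_(k < n) c k *: e k].

Definition is_ONB (e : nat -> V) : Prop :=
  (forall i j : nat, ip (e i) (e j) = (i == j)%:R) /\
  ip_closure (\bigcup_(n in [set: nat]) span_first e n) = [set: V].

Definition orth (L : set V) : set V := [set x | forall y, L y -> ip x y = 0].
Definition ominus (M L : set V) : set V := M `&` orth L.

Definition friedrichs_cos (M N : set V) : R :=
  sup [set r : R | exists x y : V,
         [/\ ominus M (M `&` N) x, ominus N (M `&` N) y,
             ipnorm x = 1, ipnorm y = 1 & r = complex.Re `|ip x y|]].

End Hilbert.

From HB Require Import structures.
From mathcomp Require Import all_boot all_order all_algebra.
From mathcomp Require Import all_classical reals.
From mathcomp Require Import complex.
From mathcomp Require Import ring lra.

(* Let T be the union of the subspaces S ∩ H_n.  Its closure lies in S, and the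
   projection theorem (which needs completeness) writes every x ∈ S as m + w with
   m in the closure of T and w ∈ S orthogonal to T.  Such a w is orthogonal to
   S ∩ H_n, and so is its orthogonal projection P_n w onto H_n; since
   <w, P_n w> = ||P_n w||^2, the definition of the Friedrichs cosine gives
   ||P_n w|| <= c ||w|| with c < 1.  As P_n w tends to w, this forces w = 0. *)

Set Implicit Arguments.
Unset Strict Implicit.
Unset Printing Implicit Defensive.

Import Order.TTheory GRing.Theory Num.Theory.
Local Open Scope ring_scope.
Local Open Scope classical_set_scope.

Lemma invr_natS_le (F : numFieldType) m n :
  (m <= n)%N -> n.+1%:R^-1 <= m.+1%:R^-1 :> F.
Proof. by move=> mn; rewrite lef_pV2 ?posrE ?ltr0Sn // ler_nat ltnS. Qed.

Section Subspaces.
Variables (R : realType) (V : lmodType R[i]).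

Section Closure.
Variables (M : set V) (hM : is_subspace M).

Lemma subspace0 : M 0.
Proof. by case: hM. Qed.

Lemma subspaceZD a x y : M x -> M y -> M (a *: x + y).
Proof. by case: hM => _; apply. Qed.

Lemma subspaceZ a x : M x -> M (a *: x).
Proof. by move=> Mx; rewrite -[_ *: x]addr0; apply: subspaceZD subspace0. Qed.

Lemma subspaceD x y : M x -> M y -> M (x + y).
Proof. by rewrite -[x in M (x + _)]scale1r; apply: subspaceZD. Qed.

Lemma subspaceB x y : M x -> M y -> M (x - y).
Proof. by move=> Mx My; rewrite -scaleN1r addrC; apply: subspaceZD. Qed.

End Closure.

Lemma span_first_subspace (e : nat -> V) n : is_subspace (span_first e n).
Proof.
split; first by exists (fun _ => 0); rewrite big1 // => k _; rewrite scale0r.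
move=> a _ _ [c ->] [d ->]; exists (fun k => a * c k + d k).
rewrite scaler_sumr -big_split /=; apply: eq_bigr => k _.
by rewrite scalerDl scalerA.
Qed.

Lemma span_first_mono (e : nat -> V) n m :
  (n <= m)%N -> span_first e n `<=` span_first e m.
Proof.
move=> nm x [c ->]; exists (fun k => if (k < n)%N then c k else 0).
rewrite (big_ord_widen m (fun k => c k *: e k) nm) big_mkcond /=.
by apply: eq_bigr => k _; case: ifP; rewrite ?scale0r.
Qed.

End Subspaces.

Section InnerProduct.
Variable R : realType.
Local Notation C := R[i].
Variable V : lmodType C.
Variable ip : V -> V -> C.
Hypothesis hip : is_inner_product ip.

Lemma ipDl x y z : ip (x + y) z = ip x z + ip y z.
Proof. by case: hip => L _ _ _; have := L 1 x y z; rewrite scale1r mul1r. Qed.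

Lemma ip0l z : ip 0 z = 0.
Proof. by apply: (@addrI _ (ip 0 z)); rewrite addr0 -ipDl addr0. Qed.

Lemma ipZl a x z : ip (a *: x) z = a * ip x z.
Proof. by case: hip => L _ _ _; have := L a x 0 z; rewrite addr0 ip0l addr0. Qed.

Lemma ipC x y : ip y x = (ip x y)^*.
Proof. by case: hip. Qed.

Lemma ipNl x z : ip (- x) z = - ip x z.
Proof. by rewrite -scaleN1r ipZl mulN1r. Qed.

Lemma ipBl x y z : ip (x - y) z = ip x z - ip y z.
Proof. by rewrite ipDl ipNl. Qed.

Lemma ipDr x y z : ip z (x + y) = ip z x + ip z y.
Proof. by rewrite ipC ipDl rmorphD /= -!ipC. Qed.

Lemma ipZr a x z : ip z (a *: x) = a^* * ip z x.
Proof. by rewrite ipC ipZl rmorphM /= -ipC. Qed.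

Lemma ip0r z : ip z 0 = 0.
Proof. by rewrite ipC ip0l conjC0. Qed.

Lemma ipNr x z : ip z (- x) = - ip z x.
Proof. by rewrite ipC ipNl rmorphN /= -ipC. Qed.

Lemma ipBr x y z : ip z (x - y) = ip z x - ip z y.
Proof. by rewrite ipDr ipNr. Qed.

Lemma ip_sumr n (f : 'I_n -> V) z : ip z (\sum_(k < n) f k) = \sum_(k < n) ip z (f k).
Proof.
elim: n f => [|n IH] f; first by rewrite !big_ord0 ip0r.
by rewrite !big_ord_recr /= ipDr IH.
Qed.

Lemma conj_realC (r : R) : (r%:C%C)^* = r%:C%C.
Proof. by apply: conj_Creal; rewrite complex_real. Qed.

Definition sqnorm (x : V) : R := complex.Re (ip x x).

Lemma ip_xx x : ip x x = (sqnorm x)%:C%C.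
Proof.
case: hip => _ _ P _; have := P x; rewrite /sqnorm.
by case: (ip x x) => a b /ger0_Im /= ->.
Qed.

Lemma sqnorm_ge0 x : 0 <= sqnorm x.
Proof. by case: hip => _ _ P _; have := P x; rewrite ip_xx lecR. Qed.

Lemma sqnorm_eq0 x : sqnorm x = 0 -> x = 0.
Proof. by case: hip => _ _ _ P h; apply: P; rewrite ip_xx h. Qed.

Lemma ipnormE x : ipnorm ip x = Num.sqrt (sqnorm x).
Proof. by []. Qed.

Lemma ipnorm_ge0 x : 0 <= ipnorm ip x.
Proof. exact: sqrtr_ge0. Qed.

Lemma sqnorm_ipnorm x : sqnorm x = ipnorm ip x ^+ 2.
Proof. by rewrite sqr_sqrtr ?sqnorm_ge0. Qed.

Lemma ipnorm_le x y : (ipnorm ip x <= ipnorm ip y) = (sqnorm x <= sqnorm y).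
Proof. by rewrite ler_sqrt ?sqnorm_ge0. Qed.

Lemma ipnorm_ltP x (r : R) : 0 < r -> (ipnorm ip x < r) = (sqnorm x < r ^+ 2).
Proof.
by move=> r0; rewrite sqnorm_ipnorm ltr_pXn2r ?nnegrE ?ipnorm_ge0 ?ltW.
Qed.

Lemma sqnormN x : sqnorm (- x) = sqnorm x.
Proof. by rewrite /sqnorm ipNl ipNr opprK. Qed.

Lemma ipnormBC x y : ipnorm ip (x - y) = ipnorm ip (y - x).
Proof. by rewrite !ipnormE -sqnormN opprB. Qed.

Lemma sqnormZ (r : R) x : sqnorm (r%:C%C *: x) = r ^+ 2 * sqnorm x.
Proof.
apply: complexI; rewrite -ip_xx ipZl ipZr conj_realC ip_xx.
by rewrite rmorphM rmorphXn /= expr2 mulrA.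
Qed.

Lemma ipnormZ (r : R) x : ipnorm ip (r%:C%C *: x) = `|r| * ipnorm ip x.
Proof. by rewrite !ipnormE sqnormZ sqrtrM ?sqr_ge0 // sqrtr_sqr. Qed.

Lemma sqnormD x y : sqnorm (x + y) = sqnorm x + sqnorm y + 2 * complex.Re (ip x y).
Proof.
apply: complexI; rewrite -ip_xx ipDl !ipDr !ip_xx (ipC x y).
rewrite !rmorphD rmorphM /= [(complex.Re (ip x y))%:C%C]complexRe ReE.
by rewrite [in RHS]rmorphD /= rmorph1; field.
Qed.

Lemma sqnormD_orth x y : ip x y = 0 -> sqnorm (x + y) = sqnorm x + sqnorm y.
Proof. by move=> h; rewrite sqnormD h mulr0 addr0. Qed.

Lemma sqnorm_parallelogram x y :
  sqnorm (x + y) + sqnorm (x - y) = 2 * sqnorm x + 2 * sqnorm y.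
Proof.
rewrite !sqnormD sqnormN ipNr.
have -> : complex.Re (- ip x y) = - complex.Re (ip x y) by case: (ip x y).
lra.
Qed.

Definition ipabs (x y : V) : R := complex.Re `|ip x y|.

Lemma ipabsE x y : `|ip x y| = (ipabs x y)%:C%C.
Proof. by rewrite /ipabs normc_def. Qed.

Lemma ipabs_ge0 x y : 0 <= ipabs x y.
Proof. by rewrite /ipabs normc_def /= sqrtr_ge0. Qed.

Lemma Re_ip_le_ipabs x y : complex.Re (ip x y) <= ipabs x y.
Proof.
rewrite /ipabs normc_def /=; case: (ip x y) => a b /=.
apply: (le_trans (ler_norm a)); rewrite -sqrtr_sqr ler_sqrt ?addr_ge0 ?sqr_ge0 //.
by rewrite lerDl sqr_ge0.
Qed.

Lemma ipabs_sqr x y : ((ipabs x y) ^+ 2)%:C%C = ip x y * (ip x y)^*.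
Proof. by rewrite rmorphXn /= -ipabsE normCK. Qed.

Lemma ipabs_eq0 x y : ipabs x y = 0 -> ip x y = 0.
Proof. by move=> h; apply/eqP; rewrite -normr_eq0 ipabsE h. Qed.

Lemma Cauchy_Schwarz x y : ipabs x y <= ipnorm ip x * ipnorm ip y.
Proof.
suff CS : ipabs x y ^+ 2 <= sqnorm x * sqnorm y.
  by rewrite -ler_sqr ?nnegrE ?mulr_ge0 ?ipabs_ge0 ?ipnorm_ge0 // exprMn -!sqnorm_ipnorm.
have [y0|yn0] := eqVneq (sqnorm y) 0.
  by rewrite (sqnorm_eq0 y0) /ipabs ip0r normr0 expr0n mulr_ge0 ?sqnorm_ge0.
have yp : 0 < sqnorm y by rewrite lt_def yn0 sqnorm_ge0.
set a := ip x y; set b := sqnorm y.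
have E : (sqnorm (b%:C%C *: x - a *: y))%:C%C = (b * (b * sqnorm x - ipabs x y ^+ 2))%:C%C.
  rewrite -ip_xx !ipBl !ipBr !ipZl !ipZr !ip_xx conj_realC -/b (ipC x y) -/a.
  by rewrite rmorphM rmorphB /= rmorphM /= ipabs_sqr /a; ring.
have := sqnorm_ge0 (b%:C%C *: x - a *: y); rewrite -lecR E /= => h.
rewrite -subr_ge0; move: h; rewrite (lecR 0); nra.
Qed.

Lemma ipnormD_le x y : ipnorm ip (x + y) <= ipnorm ip x + ipnorm ip y.
Proof.
rewrite -ler_sqr ?nnegrE ?addr_ge0 ?ipnorm_ge0 // -sqnorm_ipnorm sqnormD sqrrD.
rewrite -!sqnorm_ipnorm; have := Re_ip_le_ipabs x y; have := Cauchy_Schwarz x y.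
lra.
Qed.

(* Expanding [sqnorm (w - s <w,z> z)] with [s = 1 / (sqnorm z + 1)] gives
   [sqnorm w - |<w,z>|^2 s (2 - s sqnorm z)], whose correction is negative
   unless [<w,z> = 0]. *)
Lemma orth_of_min w z : (forall t : C, sqnorm w <= sqnorm (w - t *: z)) -> ip w z = 0.
Proof.
move=> H; set a := ip w z.
have zp := sqnorm_ge0 z.
set s := (sqnorm z + 1)^-1.
have sp : 0 < s by rewrite invr_gt0; lra.
have s1 : s * (sqnorm z + 1) = 1 by rewrite mulVf //; apply: lt0r_neq0; lra.
have E : (sqnorm (w - (s%:C%C * a) *: z))%:C%C =
         (sqnorm w + ipabs w z ^+ 2 * (s ^+ 2 * sqnorm z - 2 * s))%:C%C.
  rewrite -ip_xx !ipBl !ipBr !ipZl !ipZr !ip_xx (ipC w z) -/a rmorphM /= conj_realC.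
  rewrite [RHS]rmorphD /= [in RHS]rmorphM /= ipabs_sqr rmorphB /= !rmorphM /=.
  by rewrite rmorph_nat /a; ring.
have := H (s%:C%C * a); rewrite -lecR E lecR => h.
have u : s * (s * sqnorm z - 2) < 0 by rewrite pmulr_rlt0 //; nra.
have : ipabs w z ^+ 2 = 0 by have := sqr_ge0 (ipabs w z); nra.
by move/eqP; rewrite sqrf_eq0 => /eqP /ipabs_eq0.
Qed.

Lemma ipabs_le_friedrichs_cos M N x y :
  ominus ip M (M `&` N) x -> ominus ip N (M `&` N) y ->
  ipnorm ip x = 1 -> ipnorm ip y = 1 -> ipabs x y <= friedrichs_cos ip M N.
Proof.
move=> hx hy nx ny; apply: ub_le_sup; last by exists x, y.
exists 1 => r [u [v [_ _ nu nv ->]]].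
by have := Cauchy_Schwarz u v; rewrite nu nv mulr1.
Qed.

Lemma friedrichs_cos_ge0 M N : 0 <= friedrichs_cos ip M N.
Proof.
have [[x [y [hx hy nx ny]]]|none] := pselect (exists x y,
    [/\ ominus ip M (M `&` N) x, ominus ip N (M `&` N) y,
        ipnorm ip x = 1 & ipnorm ip y = 1]).
  exact: le_trans (ipabs_ge0 x y) (ipabs_le_friedrichs_cos hx hy nx ny).
rewrite /friedrichs_cos [X in sup X](_ : _ = set0) ?sup0 //.
by apply/seteqP; split => // r [x [y [hx hy nx ny _]]]; apply: none; exists x, y.
Qed.

Lemma friedrichs_cos_le1 M N : friedrichs_cos ip M N <= 1.
Proof.
rewrite /friedrichs_cos; set E := [set r | _].
have [ne|E0] := pselect (E !=set0); last by rewrite sup_out ?ler01 // => -[].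
apply: ge_sup => // r [x [y [_ _ nx ny ->]]].
by have := Cauchy_Schwarz x y; rewrite nx ny mulr1.
Qed.

Section FiniteProjection.
Variable e : nat -> V.
Hypothesis e_orthonormal : forall i j : nat, ip (e i) (e j) = (i == j)%:R.

Definition proj n w := \sum_(k < n) ip w (e k) *: e k.

Lemma proj_span n w : span_first e n (proj n w).
Proof. by exists (fun k => ip w (e k)). Qed.

Lemma ip_e_span n (k : 'I_n) c : ip (e k) (\sum_(j < n) c j *: e j) = (c k)^*.
Proof.
rewrite ip_sumr (bigD1 k) //= big1 => [|j /negbTE jk].
  by rewrite ipZr e_orthonormal eqxx mulr1 addr0.
by rewrite ipZr e_orthonormal eq_sym (_ : (j == k :> nat) = false) ?mulr0.
Qed.

Lemma ip_proj_e n w (k : 'I_n) : ip (proj n w) (e k) = ip w (e k).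
Proof. by rewrite ipC ip_e_span conjCK. Qed.

Lemma ip_sub_proj n w h : span_first e n h -> ip (w - proj n w) h = 0.
Proof.
move=> [c ->]; rewrite ipBl !ip_sumr; apply/eqP; rewrite subr_eq0; apply/eqP.
by apply: eq_bigr => k _; rewrite !ipZr ip_proj_e.
Qed.

Lemma sqnorm_sub_proj n w : sqnorm w = sqnorm (w - proj n w) + sqnorm (proj n w).
Proof. by rewrite -sqnormD_orth ?subrK //; apply/ip_sub_proj/proj_span. Qed.

Lemma proj_best n w a : span_first e n a -> sqnorm (w - proj n w) <= sqnorm (w - a).
Proof.
move=> ha; have -> : w - a = (w - proj n w) + (proj n w - a) by rewrite addrA subrK.
have orth : ip (w - proj n w) (proj n w - a) = 0.
  exact/ip_sub_proj/(subspaceB (span_first_subspace e n) (proj_span n w) ha).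
by rewrite (sqnormD_orth orth) lerDl sqnorm_ge0.
Qed.

Lemma ip_proj n w : ip w (proj n w) = (sqnorm (proj n w))%:C%C.
Proof.
by apply/eqP; rewrite -ip_xx -subr_eq0 -ipBl; apply/eqP; apply: ip_sub_proj (proj_span n w).
Qed.

Hypothesis e_dense : ip_closure ip (\bigcup_(n in [set: nat]) span_first e n) = [set: V].

Lemma proj_approx w d : 0 < d -> exists2 n, (0 < n)%N & sqnorm (w - proj n w) < d.
Proof.
move=> d0; have : ip_closure ip (\bigcup_(n in [set: nat]) span_first e n) w by rewrite e_dense.
move=> /(_ (Num.sqrt d)) [|a [N _ Na]]; first by rewrite sqrtr_gt0.
rewrite ipnorm_ltP ?sqrtr_gt0 // sqr_sqrtr ?ltW // => wa.
exists (maxn N 1); first by rewrite leq_max orbT.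
by apply: le_lt_trans wa; apply: proj_best; apply: span_first_mono (leq_maxl N 1) _ Na.
Qed.

End FiniteProjection.

Section BestApproximation.
Variable T : set V.
Hypothesis hT : is_subspace T.

Lemma best_approx_orth x m : ip_closure ip T m ->
  (forall t, T t -> ipnorm ip (x - m) <= ipnorm ip (x - t)) ->
  forall z, T z -> ip (x - m) z = 0.
Proof.
move=> Tm m_min z Tz; apply: orth_of_min => t; rewrite -ipnorm_le.
apply/ler_addgt0Pr => eps eps0; have [a Ta ma] := Tm eps eps0.
apply: le_trans (m_min _ (subspaceZD hT t Tz Ta)) _.
have -> : x - (t *: z + a) = (x - m - t *: z) + (m - a).
  by rewrite opprD addrA [RHS]addrA [x - m - _]addrAC subrK.
by apply: le_trans (ipnormD_le _ _) _; rewrite lerD2l ltW.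
Qed.

Hypothesis complete : forall u : nat -> V, ip_cauchy ip u -> exists l, ip_converges_to ip u l.
Variable x : V.

Let dist2 := inf [set sqnorm (x - t) | t in T].

Lemma dist2_set_has_inf : has_inf [set sqnorm (x - t) | t in T].
Proof.
split; last by exists 0 => _ [s _ <-]; apply: sqnorm_ge0.
by exists (sqnorm (x - 0)), 0 => //; apply: subspace0 hT.
Qed.

Lemma dist2_le t : T t -> dist2 <= sqnorm (x - t).
Proof. by move=> Tt; apply: ge_inf dist2_set_has_inf.2 _ _; exists t. Qed.

Lemma dist2_ge0 : 0 <= dist2.
Proof.
by apply: lb_le_inf dist2_set_has_inf.1 _ => _ [t _ <-]; apply: sqnorm_ge0.
Qed.

Lemma exists_minimizing_seq : exists f : nat -> V,
  forall k, T (f k) /\ sqnorm (x - f k) < dist2 + k.+1%:R^-1.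
Proof.
suff /choice[f hf] : forall k, exists t,
    T t /\ sqnorm (x - t) < dist2 + k.+1%:R^-1 by exists f.
move=> k; have k0 : 0 < k.+1%:R^-1 :> R by rewrite invr_gt0 ltr0Sn.
by have [_ [t Tt <-] ?] := inf_adherent k0 dist2_set_has_inf; exists t.
Qed.

Section MinimizingSequence.
Variable f : nat -> V.
Hypothesis f_min : forall k, T (f k) /\ sqnorm (x - f k) < dist2 + k.+1%:R^-1.

(* Parallelogram law around the midpoint [(f k + f j) / 2], which lies in [T]. *)
Lemma minimizing_seq_cauchy : ip_cauchy ip f.
Proof.
move=> eps eps0.
have eps4 : 0 < eps ^+ 2 / 4 by rewrite divr_gt0 ?exprn_gt0.
have [N hN] := ltr_add_invr eps4; rewrite add0r in hN.
exists N => j k jN kN; rewrite ipnorm_ltP //.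
set mid := (2^-1 : R)%:C%C *: (f k + f j).
have Tmid : T mid := subspaceZ hT _ (subspaceD hT (f_min k).1 (f_min j).1).
have sum_mid : (x - f k) + (x - f j) = (2 : R)%:C%C *: (x - mid).
  rewrite scalerBr scalerA -rmorphM mulfV ?pnatr_eq0 // scale1r.
  by rewrite -[(2 : R)]/(1 + 1) rmorphD rmorph1 scalerDl scale1r opprD addrACA.
have diff_ij : (x - f k) - (x - f j) = f j - f k.
  by rewrite opprB addrC addrA subrK.
have := sqnorm_parallelogram (x - f k) (x - f j).
rewrite sum_mid sqnormZ diff_ij.
move: hN; have := dist2_le Tmid; have := (f_min j).2; have := (f_min k).2.
have := invr_natS_le R jN; have := invr_natS_le R kN.
set ij := j.+1%:R^-1; set ik := k.+1%:R^-1; set iN := N.+1%:R^-1.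
lra.
Qed.

Lemma minimizing_seq_lim m : ip_converges_to ip f m -> ipnorm ip (x - m) <= Num.sqrt dist2.
Proof.
move=> fm; apply/ler_addgt0Pr => eps eps0.
have eps2 : 0 < eps / 2 by rewrite divr_gt0.
have [N1 hN1] := fm _ eps2.
have [N2 hN2] := ltr_add_invr (exprn_gt0 2 eps2); rewrite add0r in hN2.
set k := maxn N1 N2.
have sd := sqrtr_ge0 dist2.
have xfk : ipnorm ip (x - f k) < Num.sqrt dist2 + eps / 2.
  rewrite ipnorm_ltP ?ltr_wpDl //; apply: lt_le_trans (f_min k).2 _.
  rewrite sqrrD sqr_sqrtr ?dist2_ge0 //.
  move: hN2; have := invr_natS_le R (leq_maxr N1 N2); have := mulr_ge0 sd (ltW eps2).
  set ik := k.+1%:R^-1; set iN := N2.+1%:R^-1; lra.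
have -> : x - m = (x - f k) + (f k - m) by rewrite addrA subrK.
by apply: le_trans (ipnormD_le _ _) _; have := hN1 k (leq_maxl _ _); lra.
Qed.

End MinimizingSequence.

Lemma exists_best_approx : exists2 m, ip_closure ip T m &
  forall t, T t -> ipnorm ip (x - m) <= ipnorm ip (x - t).
Proof.
have [f f_min] := exists_minimizing_seq.
have [m fm] := complete (minimizing_seq_cauchy f_min).
exists m.
  move=> eps eps0; have [N hN] := fm eps eps0; exists (f N); first exact: (f_min N).1.
  by rewrite ipnormBC; apply: hN.
move=> t Tt; apply: le_trans (minimizing_seq_lim f_min fm) _.
by rewrite ipnormE ler_sqrt ?sqnorm_ge0 // dist2_le.
Qed.

Lemma orth_decomposition :
  exists2 m, ip_closure ip T m & forall z, T z -> ip (x - m) z = 0.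
Proof. by have [m Tm m_min] := exists_best_approx; exists m => //; apply: best_approx_orth. Qed.

End BestApproximation.

Section FinitePart.
Variable e : nat -> V.
Hypothesis e_orthonormal : forall i j : nat, ip (e i) (e j) = (i == j)%:R.
Variable S : set V.
Hypothesis hS : closed_subspace ip S.

Lemma ipnorm_proj_le_cos n w : S w -> (forall z, (S `&` span_first e n) z -> ip w z = 0) ->
  ipnorm ip (proj e n w) <= friedrichs_cos ip S (span_first e n) * ipnorm ip w.
Proof.
move=> Sw w_orth; set p := proj e n w.
have [p0|pn0] := eqVneq (ipnorm ip p) 0.
  by rewrite p0 mulr_ge0 ?friedrichs_cos_ge0 ?ipnorm_ge0.
have p_pos : 0 < ipnorm ip p by rewrite lt_def pn0 ipnorm_ge0.
have w_pos : 0 < ipnorm ip w.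
  apply: lt_le_trans p_pos _; rewrite ipnorm_le (sqnorm_sub_proj e_orthonormal n w).
  by rewrite lerDr sqnorm_ge0.
have unit y : 0 < ipnorm ip y -> ipnorm ip ((ipnorm ip y)^-1%:C%C *: y) = 1.
  by move=> y0; rewrite ipnormZ ger0_norm ?invr_ge0 ?ltW // mulVf ?gt_eqF.
pose u := (ipnorm ip w)^-1%:C%C *: w; pose v := (ipnorm ip p)^-1%:C%C *: p.
have Hu : ominus ip S (S `&` span_first e n) u.
  by split; [exact: (subspaceZ hS.1 _ Sw) | move=> z Sz; rewrite ipZl w_orth ?mulr0].
have Hv : ominus ip (span_first e n) (S `&` span_first e n) v.
  split; first exact: (subspaceZ (span_first_subspace e n) _ (proj_span e n w)).
  move=> z [Sz Hz]; have := ip_sub_proj e_orthonormal w Hz.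
  by rewrite ipZl ipBl w_orth // sub0r => /eqP; rewrite oppr_eq0 => /eqP ->; rewrite mulr0.
have uv : ipabs u v = ipnorm ip p / ipnorm ip w.
  rewrite /ipabs ipZl ipZr conj_realC ip_proj // sqnorm_ipnorm -!rmorphM /=.
  rewrite expr0n addr0 sqrtr_sqr ger0_norm ?mulr_ge0 ?invr_ge0 ?sqr_ge0 ?ltW //.
  by rewrite -/p; field; rewrite !gt_eqF.
have := ipabs_le_friedrichs_cos Hu Hv (unit w w_pos) (unit p p_pos).
by rewrite uv ler_pdivrMr.
Qed.

Let T := \bigcup_(n in [set n : nat | (0 < n)%N]) (S `&` span_first e n).

Lemma finite_part_subspace : is_subspace T.
Proof.
split.
  exists 1%N => //; split; first exact: (subspace0 hS.1).
  exact: subspace0 (span_first_subspace e 1).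
move=> a x y [n n0 [Sx Hx]] [m m0 [Sy Hy]].
exists (maxn n m); first by rewrite /= leq_max n0.
split; first exact: (subspaceZD hS.1 a Sx Sy).
apply: (subspaceZD (span_first_subspace e (maxn n m)) a).
  exact: span_first_mono (leq_maxl n m) _ Hx.
exact: span_first_mono (leq_maxr n m) _ Hy.
Qed.

Lemma closure_finite_part_sub : ip_closure ip T `<=` S.
Proof.
move=> x Tx; apply: hS.2 => eps eps0.
by have [a [n _ [Sa _]] xa] := Tx eps eps0; exists a.
Qed.

Hypothesis e_dense : ip_closure ip (\bigcup_(n in [set: nat]) span_first e n) = [set: V].

(* [proj e n w] tends to [w], while its norm stays below [c] times that of [w]. *)
Lemma finite_part_orth_eq0 c : c < 1 ->
    (forall n, (0 < n)%N -> friedrichs_cos ip S (span_first e n) <= c) ->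
  forall w, S w -> (forall z, T z -> ip w z = 0) -> w = 0.
Proof.
move=> c1 cos_le_c w Sw wT; apply: sqnorm_eq0.
have c0 : 0 <= c := le_trans (friedrichs_cos_ge0 _ _) (cos_le_c 1%N isT).
have proj_le n : (0 < n)%N -> sqnorm (proj e n w) <= c ^+ 2 * sqnorm w.
  move=> n0; rewrite !sqnorm_ipnorm -exprMn ler_sqr ?nnegrE ?mulr_ge0 ?ipnorm_ge0 //.
  apply: le_trans (ipnorm_proj_le_cos Sw _) _; first by move=> z Sz; apply: wT; exists n.
  by rewrite ler_wpM2r ?ipnorm_ge0 ?cos_le_c.
have : sqnorm w * (1 - c ^+ 2) <= 0.
  apply/ler_addgt0Pr => d d0; have [n n0 approx] := proj_approx e_orthonormal e_dense w d0.
  have := sqnorm_sub_proj e_orthonormal n w; have := proj_le n n0; lra.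
have c2 : 0 < 1 - c ^+ 2 by rewrite subr_gt0 exprn_ilt1.
by rewrite pmulr_lle0 // => w_le0; apply/eqP; rewrite eq_le w_le0 sqnorm_ge0.
Qed.

End FinitePart.
End InnerProduct.

(* H_n = span{e_1,...,e_n} is rendered as span_first e n = span{e 0,...,e (n-1)}
   with the basis indexed from 0. *)
Theorem lemma4p8 (R : realType) (V : lmodType R[i]) (ip : V -> V -> R[i])
  (hH : is_hilbert ip) (e : nat -> V) (he : is_ONB ip e)
  (S : set V) (hS : closed_subspace ip S)
  (hc : sup [set friedrichs_cos ip S (span_first e n) | n in [set n : nat | (0 < n)%N]] < 1) :
  ip_closure ip (\bigcup_(n in [set n : nat | (0 < n)%N]) (S `&` span_first e n)) = S.
Proof.
case: hH => hip complete; case: he => e_orthonormal e_dense.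
set c := sup _ in hc.
have cos_le_c n : (0 < n)%N -> friedrichs_cos ip S (span_first e n) <= c.
  move=> n0; apply: ub_le_sup; last by exists n.
  by exists 1 => _ [m _ <-]; apply: friedrichs_cos_le1.
apply/seteqP; split; first exact: closure_finite_part_sub.
move=> x Sx.
have [m Tm m_orth] := orth_decomposition hip (finite_part_subspace e hS) complete x.
have Sxm : S (x - m) := subspaceB hS.1 Sx (closure_finite_part_sub hS Tm).
have xm0 : x - m = 0 :=
  finite_part_orth_eq0 hip e_orthonormal hS e_dense hc cos_le_c Sxm m_orth.
by rewrite -(subrK m x) xm0 add0r.
Qed.
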